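(* Every COI-graph $G$ has a proxy graph, i.e. there exists a NOI-graph $G'$ on the same vertex set such that the kernels of the hybrid Laplacians $\mathcal{L}(G)$ and $\mathcal{L}(G')$ are identical.
   Context: A hybrid graph $G=(V,E_L+E_Q)$ has a set $E_L$ of $L$-edges and a set $E_Q$ of $Q$-edges. Its hybrid Laplacian is $\mathcal{L}(G)=L(S_l)+Q(S_q)$ with $S_l=(V,E_L)$, $S_q=(V,E_Q)$, $L=D-A$ the signed Laplacian and $Q=D+A$ the signless Laplacian. $G$ is a NOI-graph if $S_q$ is bipartite and no vertex is incident to both a $Q$-edge and an $L$-edge. $G$ is a COI-graph if $S_q$ is bipartite with a bipartition $(P_1,P_2)$ of $V$ (every $Q$-edge joining $P_1$ to $P_2$) such that every $L$-edge joins two vertices in the same part. *)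

From HB Require Import structures.
From mathcomp Require Import all_boot all_order all_algebra.
Set Implicit Arguments. Unset Strict Implicit. Unset Printing Implicit Defensive.
Import Order.TTheory GRing.Theory Num.Theory.
Local Open Scope ring_scope.

Definition simple_rel (n : nat) (e : rel 'I_n) : Prop :=
  (forall x y, e x y = e y x) /\ (forall x, ~~ e x x).

Definition hybrid_graph (n : nat) (eL eQ : rel 'I_n) : Prop :=
  simple_rel eL /\ simple_rel eQ /\ (forall x y, ~~ (eL x y && eQ x y)).

Definition deg (n : nat) (e : rel 'I_n) (i : 'I_n) : nat := #|[set j | e i j]|.

Definition degmx (R : nzRingType) (n : nat) (e : rel 'I_n) : 'M[R]_n :=
  \matrix_(i, j) (if i == j then (deg e i)%:R else 0).

Definition adjmx (R : nzRingType) (n : nat) (e : rel 'I_n) : 'M[R]_n :=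
  \matrix_(i, j) (e i j)%:R.

Definition lapL (R : nzRingType) (n : nat) (e : rel 'I_n) : 'M[R]_n :=
  degmx R e - adjmx R e.
Definition lapQ (R : nzRingType) (n : nat) (e : rel 'I_n) : 'M[R]_n :=
  degmx R e + adjmx R e.

Definition hybrid_lap (R : nzRingType) (n : nat) (eL eQ : rel 'I_n) : 'M[R]_n :=
  lapL R eL + lapQ R eQ.

Definition in_kernel (R : nzRingType) (n : nat) (M : 'M[R]_n) (v : 'cV[R]_n) : Prop :=
  M *m v = 0.

Definition bipartite (n : nat) (e : rel 'I_n) : Prop :=
  exists P : 'I_n -> bool, forall x y, e x y -> P x != P y.

Definition NOI_graph (n : nat) (eL eQ : rel 'I_n) : Prop :=
  bipartite eQ /\
  forall v : 'I_n, ~ ((exists u, eQ v u) /\ (exists w, eL v w)).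

(* COI-graph: bipartition (P1,P2) (encoded by P : 'I_n -> bool) with every
   Q-edge between the parts and every L-edge inside a part *)
Definition COI_graph (n : nat) (eL eQ : rel 'I_n) : Prop :=
  exists P : 'I_n -> bool,
    (forall x y, eQ x y -> P x != P y) /\ (forall x y, eL x y -> P x = P y).

From HB Require Import structures.
From mathcomp Require Import all_boot all_order all_algebra.
From mathcomp Require Import ring.
Set Implicit Arguments. Unset Strict Implicit. Unset Printing Implicit Defensive.
Import Order.TTheory GRing.Theory Num.Theory.
Local Open Scope ring_scope.

(* The quadratic form of the hybrid Laplacian is a sum of squares
   (v_x - v_y)^2 over L-edges and (v_x + v_y)^2 over Q-edges, so over an
   ordered ring its kernel consists of the vectors that are constant along
   L-edges and change sign along Q-edges.  Flipping the sign of v on one side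
   of a COI bipartition turns both conditions into "constant along edges", so
   the kernel only depends on the connected components of E_L + E_Q and on
   the bipartition.  The proxy keeps these data while separating the two edge
   types: a component lying inside one part becomes an L-clique, any other
   component becomes the complete bipartite Q-graph between its two sides. *)

Lemma deg_sum (R : nzRingType) n (e : rel 'I_n) i :
  (deg e i)%:R = \sum_j (e i j)%:R :> R.
Proof.
rewrite /deg cardsE -sum1_card natr_sum big_mkcond /=.
by apply: eq_bigr => j _; rewrite -topredE /=; case: (e i j).
Qed.

Lemma hybrid_lap_mulmx (R : comNzRingType) n (eL eQ : rel 'I_n) (v : 'cV[R]_n) i :
  (hybrid_lap R eL eQ *m v) i 0 =
  \sum_j ((eL i j)%:R * (v i 0 - v j 0) + (eQ i j)%:R * (v i 0 + v j 0)).
Proof.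
rewrite mxE /hybrid_lap /lapL /lapQ.
under eq_bigr => j _ do rewrite !mxE.
transitivity (\sum_j (if j == i then ((deg eL i)%:R + (deg eQ i)%:R) * v i 0 else 0)
   + \sum_j ((eQ i j)%:R - (eL i j)%:R) * v j 0).
  rewrite -big_split /=; apply: eq_bigr => j _.
  by rewrite eq_sym; case: eqP => [->|_]; ring.
rewrite -big_mkcond /= big_pred1_eq !deg_sum mulrDl !mulr_suml -!big_split /=.
by apply: eq_bigr => j _; ring.
Qed.

Lemma hybrid_lap_quad (R : comNzRingType) n (eL eQ : rel 'I_n) (v : 'cV[R]_n) :
  symmetric eL -> symmetric eQ ->
  (\sum_i v i 0 * (hybrid_lap R eL eQ *m v) i 0) *+ 2 =
  \sum_i \sum_j ((eL i j)%:R * (v i 0 - v j 0) ^+ 2 + (eQ i j)%:R * (v i 0 + v j 0) ^+ 2).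
Proof.
move=> sL sQ.
pose g i j := (eL i j)%:R * v i 0 * (v i 0 - v j 0) + (eQ i j)%:R * v i 0 * (v i 0 + v j 0).
have -> : \sum_i v i 0 * (hybrid_lap R eL eQ *m v) i 0 = \sum_i \sum_j g i j.
  apply: eq_bigr => i _; rewrite hybrid_lap_mulmx mulr_sumr.
  by apply: eq_bigr => j _; rewrite /g; ring.
rewrite mulr2n [X in _ + X]exchange_big -big_split /=.
apply: eq_bigr => i _; rewrite -big_split /=.
by apply: eq_bigr => j _; rewrite /g (sL j i) (sQ j i); ring.
Qed.

Definition hybrid_compatible (R : zmodType) n (eL eQ : rel 'I_n) (v : 'cV[R]_n) :=
  (forall x y, eL x y -> v x 0 = v y 0) /\ (forall x y, eQ x y -> v x 0 = - v y 0).

Lemma hybrid_kernelP (R : realDomainType) n (eL eQ : rel 'I_n) (v : 'cV[R]_n) :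
  symmetric eL -> symmetric eQ ->
  in_kernel (hybrid_lap R eL eQ) v <-> hybrid_compatible eL eQ v.
Proof.
move=> sL sQ; split=> [Mv0|[vL vQ]]; last first.
  apply/matrixP => i k; rewrite ord1 hybrid_lap_mulmx mxE big1 // => j _.
  have -> : (eL i j)%:R * (v i 0 - v j 0) = 0.
    by case: (boolP (eL i j)) => [/vL ->|_]; rewrite ?subrr ?mulr0 ?mul0r.
  have -> : (eQ i j)%:R * (v i 0 + v j 0) = 0.
    by case: (boolP (eQ i j)) => [/vQ ->|_]; rewrite ?addNr ?mulr0 ?mul0r.
  by rewrite addr0.
pose t i j := (eL i j)%:R * (v i 0 - v j 0) ^+ 2 + (eQ i j)%:R * (v i 0 + v j 0) ^+ 2.
have sqr_mul_ge0 (b : bool) (a : R) : 0 <= b%:R * a ^+ 2 by rewrite mulr_ge0 ?sqr_ge0.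
have t_ge0 i j : 0 <= t i j by rewrite addr_ge0.
have t0 i j : t i j = 0.
  have := hybrid_lap_quad v sL sQ.
  rewrite Mv0 big1 ?mul0rn => [quad0|l _]; last by rewrite mxE mulr0.
  have row0 := psumr_eq0P (fun l _ => sumr_ge0 _ (fun m _ => t_ge0 l m)) (esym quad0).
  by apply: (psumr_eq0P (fun m _ => t_ge0 i m) (row0 i isT)).
split=> x y exy; move/eqP: (t0 x y); rewrite /t exy mul1r.
  rewrite paddr_eq0 ?sqr_ge0 // sqrf_eq0 subr_eq0.
  by case/andP=> /eqP.
rewrite paddr_eq0 ?sqr_ge0 // sqrf_eq0 addr_eq0.
by case/andP=> _ /eqP.
Qed.

Lemma connect_constant (T : finType) (U : eqType) (e : rel T) (f : T -> U) :
  (forall x y, e x y -> f x = f y) -> forall x y, connect e x y -> f x = f y.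
Proof.
move=> fe x y cxy.
have cl : closed e [pred z | f z == f x] by move=> u w /fe; rewrite !inE => ->.
by have := closed_connect cl cxy; rewrite !inE eqxx => /esym/eqP ->.
Qed.

Section Switching.

Variables (R : zmodType) (n : nat) (P : 'I_n -> bool).

Definition switch (v : 'cV[R]_n) (x : 'I_n) : R := if P x then v x 0 else - v x 0.

Lemma switch_eq (v : 'cV[R]_n) x y :
  (switch v x == switch v y) =
  (if P x == P y then v x 0 == v y 0 else v x 0 == - v y 0).
Proof.
by rewrite /switch; case: (P x); case: (P y) => //=; [exact: eqr_oppLR | exact: eqr_opp].
Qed.

Variables eL eQ : rel 'I_n.
Hypothesis PL : forall x y, eL x y -> P x = P y.
Hypothesis PQ : forall x y, eQ x y -> P x != P y.

Lemma hybrid_compatible_switch (v : 'cV[R]_n) :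
  hybrid_compatible eL eQ v <->
  forall x y, connect (relU eL eQ) x y -> switch v x = switch v y.
Proof.
split=> [[vL vQ]|sw].
  apply: connect_constant => x y /orP [exy|exy]; apply/eqP; rewrite switch_eq.
    by rewrite (PL exy) eqxx; apply/eqP/vL.
  by rewrite (negbTE (PQ exy)); apply/eqP/vQ.
have sw_edge x y : eL x y || eQ x y -> switch v x == switch v y.
  by move=> exy; apply/eqP/sw/connect1.
split=> x y exy.
  by move: (sw_edge x y); rewrite exy switch_eq (PL exy) eqxx => /(_ isT)/eqP.
by move: (sw_edge x y); rewrite exy orbT switch_eq (negbTE (PQ exy)) => /(_ isT)/eqP.
Qed.

End Switching.

Section Proxy.

Variables (n : nat) (e : rel 'I_n) (P : 'I_n -> bool).
Hypothesis e_sym : connect_sym e.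

Definition monochromatic (x : 'I_n) : bool :=
  [forall z, connect e x z ==> (P z == P x)].

Definition proxyL : rel 'I_n :=
  [rel x y | [&& connect e x y, x != y & monochromatic x]].

Definition proxyQ : rel 'I_n := [rel x y | connect e x y && (P x != P y)].

Lemma monochromaticP x z : monochromatic x -> connect e x z -> P z = P x.
Proof. by move/forallP/(_ z)/implyP => mx /mx/eqP. Qed.

Lemma monochromatic_connect x y :
  connect e x y -> monochromatic x = monochromatic y.
Proof.
suff mono_imp u w : connect e u w -> monochromatic u -> monochromatic w.
  by move=> cxy; apply/idP/idP; apply: mono_imp; rewrite // e_sym.
move=> cuw mu; apply/forallP => z; apply/implyP => cwz.
by rewrite (monochromaticP mu (connect_trans cuw cwz)) (monochromaticP mu cuw).
Qed.

Lemma proxyL_sym : symmetric proxyL.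
Proof.
move=> x y; rewrite /proxyL /= e_sym eq_sym.
by case: (boolP (connect e y x)) => // cyx; rewrite (monochromatic_connect cyx).
Qed.

Lemma proxyQ_sym : symmetric proxyQ.
Proof. by move=> x y; rewrite /proxyQ /= e_sym eq_sym. Qed.

Lemma proxyL_irrefl x : ~~ proxyL x x.
Proof. by rewrite /proxyL /= eqxx andbF. Qed.

Lemma proxyQ_irrefl x : ~~ proxyQ x x.
Proof. by rewrite /proxyQ /= eqxx andbF. Qed.

Lemma proxyL_monochromatic x y : proxyL x y -> monochromatic x.
Proof. by case/and3P. Qed.

Lemma proxyQ_not_monochromatic x y : proxyQ x y -> ~~ monochromatic x.
Proof.
by case/andP=> cxy Pxy; apply: contra Pxy => mx; rewrite (monochromaticP mx cxy).
Qed.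

Lemma proxyL_same_part x y : proxyL x y -> P x = P y.
Proof. by case/and3P=> cxy _ mx; rewrite (monochromaticP mx cxy). Qed.

Lemma proxyQ_cross x y : proxyQ x y -> P x != P y.
Proof. by case/andP. Qed.

Lemma connect_proxy : connect (relU proxyL proxyQ) =2 connect e.
Proof.
move=> x y; apply/idP/idP; apply: connect_sub => {x y} x y.
  by case/orP=> [/and3P[cxy _ _]|/andP[cxy _]].
move=> exy; have cxy := connect1 exy.
have edgeQ u w : connect e u w -> P u != P w -> connect (relU proxyL proxyQ) u w.
  by move=> cuw Puw; apply: connect1; rewrite /= /proxyQ /= cuw Puw orbT.
case: (eqVneq x y) => [-> //|x_neq_y].
case: (boolP (monochromatic x)) => [mx|/forallPn[z]].
  by apply: connect1; rewrite /= /proxyL /= cxy x_neq_y mx.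
rewrite negb_imply => /andP[cxz Pzx].
case: (eqVneq (P x) (P y)) => [Pxy|]; last exact: edgeQ.
(* x and y lie on the same side of a bichromatic component: go through z. *)
have cyz : connect e y z by rewrite e_sym in cxy; apply: connect_trans cxy cxz.
apply: (connect_trans (edgeQ _ _ cxz _)); first by rewrite eq_sym.
by apply: edgeQ; rewrite 1?e_sym // -Pxy.
Qed.

End Proxy.

Theorem mainTheorem7 (R : realFieldType) (n : nat) (eL eQ : rel 'I_n) :
  hybrid_graph eL eQ -> COI_graph eL eQ ->
  exists eL' eQ' : rel 'I_n,
    hybrid_graph eL' eQ' /\ NOI_graph eL' eQ' /\
    forall v : 'cV[R]_n,
      in_kernel (hybrid_lap R eL eQ) v <-> in_kernel (hybrid_lap R eL' eQ') v.
Proof.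
move=> [[sL _] [[sQ _] _]] [P [PQ PL]].
pose e := relU eL eQ.
have e_sym : connect_sym e by apply: sym_connect_sym => x y /=; rewrite sL sQ.
have incident_both x : (exists u, proxyQ e P x u) -> (exists w, proxyL e P x w) -> False.
  by move=> [u /proxyQ_not_monochromatic/negP nmx] [w /proxyL_monochromatic].
exists (proxyL e P), (proxyQ e P); split; [|split].
- split; first by split; [exact: proxyL_sym | exact: proxyL_irrefl].
  split; first by split; [exact: proxyQ_sym | exact: proxyQ_irrefl].
  by move=> x y; apply/negP => /andP[lxy qxy]; apply: (incident_both x); exists y.
- split; first by exists P => x y /andP[].
  by move=> x [qx lx]; apply: incident_both qx lx.
move=> v; rewrite !hybrid_kernelP //; [|exact: proxyL_sym|exact: proxyQ_sym].
rewrite (hybrid_compatible_switch PL PQ).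
rewrite (hybrid_compatible_switch (@proxyL_same_part _ e P) (@proxyQ_cross _ e P)).
have same_connect := connect_proxy P e_sym.
by split=> sw x y; [rewrite same_connect | rewrite -same_connect]; apply: sw.
Qed.
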